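(* Let $H$ be a finite group with a subgroup $H_{1}$ of index $u\ge 2$, let $V$ be an $\mathbb{F}H_{1}$-module of dimension $a$ over a field $\mathbb{F}$ of characteristic $p>0$, and let $U\le \mathrm{Sym}(u)$ be the image of the action of $H$ on the set of right cosets of $H_{1}$ in $H$. If $U\in\{\mathrm{Alt}(u),\mathrm{Sym}(u)\}$, then every $\mathbb{F}H$-submodule of the induced module $V\uparrow^{H}_{H_{1}}$ can be generated, as an $\mathbb{F}H$-module, by $2a$ elements. *)

From HB Require Import structures.
From mathcomp Require Import all_boot all_order all_algebra all_fingroup.
From mathcomp Require Import mxrepresentation.
Set Implicit Arguments. Unset Strict Implicit. Unset Printing Implicit Defensive.
Import GRing.Theory.
Local Open Scope ring_scope.
Local Open Scope group_scope.

Section Induced.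
Variables (F : fieldType) (gT : finGroupType) (H H1 : {group gT}) (a : nat).
Variable rV : mx_representation F H1 a.

Definition ind_trans : {set gT} := transversal (rcosets H1 H) H.
Definition ind_deg : nat := #|ind_trans|.
Definition ind_rep (i : 'I_ind_deg) : gT := enum_val i.

(* The induced module V^H_{H1} = (+)_i V (x) t_i is modelled by matrices
   M : 'M_(ind_deg, a), row i being the component in V (x) t_i.
   Right action of g: (v (x) t_i) g = v rV(t_i g t_j^-1) (x) t_j
   where t_j is the representative with H1 t_i g = H1 t_j. *)
Definition ind_act (g : gT) (M : 'M[F]_(ind_deg, a)) : 'M[F]_(ind_deg, a) :=
  \matrix_(j < ind_deg)
    (\sum_(i < ind_deg)
        (if (ind_rep i * g * (ind_rep j)^-1)%g \in H1
         then row i M *m rV (ind_rep i * g * (ind_rep j)^-1)%g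
         else 0))%R.

Definition ind_mx (g : gT) : 'M[F]_(ind_deg * a) := lin_mx (ind_act g).

Definition ind_submod m (W : 'M[F]_(m, ind_deg * a)) : Prop :=
  forall x, x \in H -> (W *m ind_mx x <= W)%MS.

Definition ind_gen k (v : 'I_k -> 'rV[F]_(ind_deg * a)) : 'M[F]_(ind_deg * a) :=
  (\sum_(i < k) \sum_(x in H) <<v i *m ind_mx x>>)%MS.

End Induced.

Section CosetAction.
Variables (gT : finGroupType) (H H1 : {group gT}).

Definition coset_perm_image : {set {perm {set gT}}} :=
  [set restr_perm (rcosets H1 H) (actperm 'Rs x) | x in H].

Definition coset_Sym : {set {perm {set gT}}} := Sym (rcosets H1 H).
Definition coset_Alt : {set {perm {set gT}}} :=
  [set s in Sym (rcosets H1 H) | ~~ odd_perm s].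
End CosetAction.

(* Since the image of H contains Alt(u), some y in H acts on the u right cosets
   of H1 as an even cycle through all of them but at most one (a u-cycle when u
   is odd, a (u-1)-cycle when u is even).  Restricted to <y>, the induced module
   is therefore generated by the 2a vectors spanning V (x) t_c0 and V (x) t_c1,
   where H1 t_c0 lies on the cycle and H1 t_c1 is the remaining coset.  Over the
   quotient F<y> of the principal ideal domain F[x], a submodule of a
   k-generated module is k-generated, so every FH-submodule W is generated by
   2a of its elements already as an F<y>-module. *)

From HB Require Import structures.
From mathcomp Require Import all_boot all_order all_algebra all_fingroup.
From mathcomp Require Import mxrepresentation zify.
Set Implicit Arguments. Unset Strict Implicit. Unset Printing Implicit Defensive.
Import GRing.Theory.
Local Open Scope ring_scope.

Lemma stablemxX (F : fieldType) m n (V : 'M[F]_(m, n)) (A : 'M[F]_n) e :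
  stablemx V A -> stablemx V (A ^+ e).
Proof.
move=> VA; elim: e => [|e IH]; first by rewrite expr0 mulmx1.
by rewrite exprSr; apply: stablemxM.
Qed.

Section CyclicSpan.
Variables (F : fieldType) (N K : nat) (A : 'M[F]_N).
Hypotheses (K_gt0 : (0 < K)%N) (AK : A ^+ K = 1).

Definition cyclic_span (w : 'rV[F]_N) : 'M_N := (\sum_(k < K) <<w *m A ^+ k>>)%MS.

Definition cyclic_spans (s : seq 'rV[F]_N) : 'M_N := (\sum_(w <- s) cyclic_span w)%MS.

Lemma cyclic_span_pow w k : (w *m A ^+ k <= cyclic_span w)%MS.
Proof.
rewrite (divn_eq k K) exprD mulnC exprM AK expr1n mul1r.
by rewrite (sumsmx_sup (Ordinal (ltn_pmod k K_gt0))) ?genmxE.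
Qed.

Lemma cyclic_span_stable w : stablemx (cyclic_span w) A.
Proof.
rewrite sumsmxMr; apply/sumsmx_subP => k _.
by rewrite (eqmxMr _ (genmxE _)) -mulmxA -[_ *m A]/(A ^+ k * A) -exprSr cyclic_span_pow.
Qed.

Lemma cyclic_spans_cons w s :
  cyclic_spans (w :: s) = (cyclic_span w + cyclic_spans s)%MS.
Proof. by rewrite /cyclic_spans big_cons. Qed.

Lemma cyclic_spans_stable s : stablemx (cyclic_spans s) A.
Proof.
elim: s => [|w s IH]; first by rewrite /cyclic_spans big_nil stable0mx.
by rewrite cyclic_spans_cons stableDmx ?cyclic_span_stable.
Qed.

Lemma cyclic_span_sub_spans w s : w \in s -> (cyclic_span w <= cyclic_spans s)%MS.
Proof.
elim: s => [|v s IH] //; rewrite inE cyclic_spans_cons => /predU1P [->|ws].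
  exact: addsmxSl.
exact: submx_trans (IH ws) (addsmxSr _ _).
Qed.

Lemma cyclic_spans_subP s m (B : 'M[F]_(m, N)) :
  (forall w, w \in s -> (cyclic_span w <= B)%MS) -> (cyclic_spans s <= B)%MS.
Proof.
elim: s => [|v s IH] sB; first by rewrite /cyclic_spans big_nil sub0mx.
rewrite cyclic_spans_cons addsmx_sub sB ?mem_head // IH // => w ws.
by rewrite sB // inE ws orbT.
Qed.

Section Exchange.
Variables (M : 'M[F]_N) (w : 'rV[F]_N).
Hypothesis stableM : stablemx M A.

Local Definition partial_span j : 'M_N := (M + \sum_(k < j) <<w *m A ^+ k>>)%MS.

Lemma partial_span0 : (partial_span 0 <= M)%MS.
Proof. by rewrite /partial_span big_ord0 addsmx_sub submx_refl sub0mx. Qed.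

Lemma partial_spanS j : partial_span j.+1 = (partial_span j + <<w *m A ^+ j>>)%MS.
Proof. by rewrite /partial_span big_ord_recr /= addsmxA. Qed.

Lemma partial_span_monotone i j : (i <= j)%N -> (partial_span i <= partial_span j)%MS.
Proof.
move=> /subnKC <-; elim: (j - i)%N => [|k IH]; first by rewrite addn0.
by rewrite addnS partial_spanS (submx_trans IH) ?addsmxSl.
Qed.

Lemma partial_spanM j : (partial_span j *m A <= partial_span j.+1)%MS.
Proof.
rewrite /partial_span addsmxMr addsmx_sub (submx_trans stableM) ?addsmxSl //=.
rewrite sumsmxMr; apply/sumsmx_subP => k _; rewrite (eqmxMr _ (genmxE _)) -mulmxA.
rewrite -[_ *m A]/(A ^+ k * A) -exprSr (submx_trans _ (addsmxSr _ _)) //.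
by rewrite (sumsmx_sup (Ordinal (ltn_ord k : (k.+1 < j.+1)%N))) ?genmxE.
Qed.

Lemma partial_spanMX j e : (partial_span j *m A ^+ e <= partial_span (j + e))%MS.
Proof.
elim: e => [|e IH]; first by rewrite mulmx1 addn0.
by rewrite exprSr mulmxA addnS (submx_trans (submxMr A IH)) ?partial_spanM.
Qed.

Lemma sub_partial_spanS j (y : 'rV[F]_N) : (y <= partial_span j.+1)%MS ->
  exists v c, (v <= partial_span j)%MS /\ y = v + c *: (w *m A ^+ j).
Proof.
rewrite partial_spanS => /sub_addsmxP [[v1 v2] /= ->].
have /sub_rVP [c ->] : (v2 *m <<w *m A ^+ j>> <= w *m A ^+ j)%MS.
  by rewrite (submx_trans (submxMl _ _)) ?genmxE.
by exists (v1 *m partial_span j), c; rewrite submxMl.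
Qed.

(* If z in W has leading term c w A^d (c != 0) in the flag [partial_span], the
   translates of z by powers of A cancel the leading term of every element of W
   further up the flag. *)
Lemma cap_partial_span_sub m (W : 'M[F]_(m, N)) d (z v0 : 'rV[F]_N) c :
    stablemx W A -> (z <= W)%MS -> (W :&: partial_span d <= M)%MS ->
    (v0 <= partial_span d)%MS -> c != 0 -> z = v0 + c *: (w *m A ^+ d) ->
  forall j, (W :&: partial_span j <= (W :&: M) + cyclic_span z)%MS.
Proof.
move=> WA zW Wd v0S c0 zE; elim=> [|j IH].
  rewrite (submx_trans _ (addsmxSl _ _)) // sub_capmx capmxSl /=.
  exact: submx_trans (capmxSr _ _) partial_span0.
have [jd|dj] := leqP j.+1 d.
  rewrite (submx_trans _ (addsmxSl _ _)) // sub_capmx capmxSl /= (submx_trans _ Wd) //.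
  by rewrite capmxS ?partial_span_monotone.
apply/rV_subP => y; rewrite sub_capmx => /andP [yW /sub_partial_spanS [v [c'] [vS yE]]].
have je : (d + (j - d) = j)%N by rewrite subnKC // -ltnS.
set e := (j - d)%N in je *.
rewrite -(subrK (c' / c *: (z *m A ^+ e)) y) addmx_sub //; last first.
  by rewrite scalemx_sub // (submx_trans _ (addsmxSr _ _)) ?cyclic_span_pow.
apply: submx_trans IH; rewrite sub_capmx; apply/andP; split.
  by rewrite addmx_sub // eqmx_opp scalemx_sub // (submx_trans (submxMr _ zW)) ?stablemxX.
have -> : y - c' / c *: (z *m A ^+ e) = v - c' / c *: (v0 *m A ^+ e).
  rewrite yE zE mulmxDl -scalemxAl -mulmxA -[A ^+ d *m _]/(A ^+ d * A ^+ e) -exprD je.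
  by rewrite scalerDr scalerA divfK // opprD addrACA subrr addr0.
rewrite addmx_sub // eqmx_opp scalemx_sub // -je.
exact: submx_trans (submxMr _ v0S) (partial_spanMX _ _).
Qed.

Lemma cyclic_span_exchange m (W : 'M[F]_(m, N)) :
    stablemx W A -> (W <= M + cyclic_span w)%MS ->
  exists2 z, (z <= W)%MS & (W <= (W :&: M) + cyclic_span z)%MS.
Proof.
move=> WA WMw.
have [WM | nWM] := boolP (W <= M)%MS.
  by exists 0; rewrite ?sub0mx // (submx_trans _ (addsmxSl _ _)) // sub_capmx submx_refl.
pose P j := ~~ (W :&: partial_span j.+1 <= M)%MS.
have [|d Pd dmin] := ex_minnP (_ : exists j, P j).
  exists K.-1; rewrite /P prednK //; apply: contra nWM => WKM.
  by rewrite (submx_trans _ WKM) // sub_capmx submx_refl.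
have Wd : (W :&: partial_span d <= M)%MS.
  case: d Pd dmin => [|d] _ dmin; first exact: submx_trans (capmxSr _ _) partial_span0.
  by apply: contraNT (negbT (ltnn d)) => /dmin.
have /row_subPn [i zM] := Pd; set z := row i _ in zM.
have zW : (z <= W)%MS by rewrite (submx_trans (row_sub _ _)) ?capmxSl.
have /sub_partial_spanS [v0 [c] [v0S zE]] : (z <= partial_span d.+1)%MS.
  by rewrite (submx_trans (row_sub _ _)) ?capmxSr.
have c0 : c != 0.
  apply: contra zM => /eqP c0.
  by rewrite (submx_trans _ Wd) // sub_capmx zW zE c0 scale0r addr0 v0S.
exists z => //; apply: submx_trans (cap_partial_span_sub WA zW Wd v0S c0 zE K).
by rewrite sub_capmx submx_refl.
Qed.

End Exchange.

Lemma cyclic_spans_sub_generated s m (W : 'M[F]_(m, N)) :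
    stablemx W A -> (W <= cyclic_spans s)%MS ->
  exists t, [/\ size t = size s, all (fun v => v <= W)%MS t & (W <= cyclic_spans t)%MS].
Proof.
elim: s m W => [|w s IH] m W WA; first by exists [::].
rewrite cyclic_spans_cons addsmxC => /(cyclic_span_exchange (cyclic_spans_stable s) WA).
case=> z zW Wz.
have WsA : stablemx (W :&: cyclic_spans s) A.
  by rewrite (submx_trans (capmxMr _ _ _)) ?capmxS ?cyclic_spans_stable.
have [t [st tW Wt]] := IH _ _ WsA (capmxSr _ _).
exists (z :: t); split => /=; first by rewrite st.
  rewrite zW; apply/allP => v /(allP tW) vW; exact: submx_trans vW (capmxSl _ _).
by rewrite cyclic_spans_cons addsmxC (submx_trans Wz) ?addsmxS.
Qed.

End CyclicSpan.

Section Induced.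
Variables (F : fieldType) (gT : finGroupType) (H H1 : {group gT}) (a : nat).
Variable rV : mx_representation F H1 a.
Hypothesis sH1H : H1 \subset H.

Local Notation n := (ind_deg H H1).
Local Notation t := (@ind_rep gT H H1).
Local Notation act := (@ind_act F gT H H1 a rV).
Local Notation imx := (@ind_mx F gT H H1 a rV).

Let trX : is_transversal (ind_trans H H1) (rcosets H1 H) H :=
  transversalP (rcosets_partition sH1H).

Lemma ind_rep_trans i : t i \in ind_trans H H1.
Proof. exact: enum_valP. Qed.

Lemma ind_repH i : t i \in H.
Proof. exact: subsetP (transversal_sub trX) _ (ind_rep_trans i). Qed.

Lemma pblock_rcosets y : y \in H -> pblock (rcosets H1 H) y = (H1 :* y)%g.
Proof.
move=> yH; apply: def_pblock; first by case/and3P: (rcosets_partition sH1H).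
  by rewrite mem_rcosets mulSGid.
by rewrite rcoset_refl.
Qed.

Lemma rcoset_ind_rep_inj i j : (H1 :* t i)%g = (H1 :* t j)%g -> i = j.
Proof.
move=> eqij; apply: enum_val_inj; rewrite -[enum_val i]/(t i) -[enum_val j]/(t j).
rewrite -(pblockK trX 1%g (ind_rep_trans i)).
by rewrite -(pblockK trX 1%g (ind_rep_trans j)) !pblock_rcosets ?ind_repH ?eqij.
Qed.

Lemma rcoset_ind_rep y : y \in H -> exists i, (H1 :* y)%g = (H1 :* t i)%g.
Proof.
move=> yH; have PB : (H1 :* y)%g \in rcosets H1 H by rewrite mem_rcosets mulSGid.
have zX := repr_mem_transversal trX 1%g PB.
exists (enum_rank_in zX (transversal_repr 1%g (ind_trans H H1) (H1 :* y))%g).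
rewrite /ind_rep enum_rankK_in //; apply/esym/rcoset_eqP.
exact: (repr_mem_pblock trX 1%g PB).
Qed.

Definition maps_coset x i j := (t i * x * (t j)^-1 \in H1)%g.

Lemma maps_cosetP x i j :
  reflect ((H1 :* (t i * x)) = H1 :* t j)%g (maps_coset x i j).
Proof. by rewrite /maps_coset -mem_rcoset; exact: rcoset_eqP. Qed.

Lemma maps_coset_unique x i j j' : maps_coset x i j -> maps_coset x i j' -> j = j'.
Proof.
by move=> /maps_cosetP eqj /maps_cosetP eqj'; apply: rcoset_ind_rep_inj; rewrite -eqj -eqj'.
Qed.

Lemma maps_coset_exists x i : x \in H -> exists j, maps_coset x i j.
Proof.
move=> xH; have [j eqj] := rcoset_ind_rep (groupM (ind_repH i) xH).
by exists j; apply/maps_cosetP.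
Qed.

Lemma row_ind_act g M j : row j (act g M) =
  \sum_i (if maps_coset g i j then row i M *m rV (t i * g * (t j)^-1)%g else 0).
Proof. by rewrite /ind_act rowK. Qed.

Fact ind_act_semilinear g : semilinear (act g).
Proof.
split=> [c M | M1 M2]; apply/row_matrixP => j; rewrite ?linearZ ?linearD /= !row_ind_act.
  rewrite scaler_sumr; apply: eq_bigr => i _; case: ifP => _; rewrite ?scaler0 //.
  by rewrite linearZ /= scalemxAl.
rewrite -big_split; apply: eq_bigr => i _ /=; case: ifP => _; rewrite ?addr0 //.
by rewrite linearD mulmxDl.
Qed.

HB.instance Definition _ g :=
  GRing.isSemilinear.Build F 'M[F]_(n, a) 'M[F]_(n, a) _ (act g)
    (ind_act_semilinear g).

Lemma mxvec_ind_act g M : mxvec M *m imx g = mxvec (act g M).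
Proof. exact: mul_vec_lin. Qed.

Lemma ind_actM x y M : x \in H -> y \in H -> act (x * y)%g M = act y (act x M).
Proof.
move=> xH yH; apply/row_matrixP => j; rewrite !row_ind_act.
rewrite [RHS](eq_bigr (fun l => \sum_i (if maps_coset x i l && maps_coset y l j then
   row i M *m rV (t i * x * (t l)^-1)%g *m rV (t l * y * (t j)^-1)%g else 0))); last first.
  move=> l _; rewrite row_ind_act; case: ifP => Ry; last first.
    by rewrite big1 // => i _; rewrite andbF.
  rewrite mulmx_suml; apply: eq_bigr => i _; rewrite andbT.
  by case: ifP => _ //; rewrite mul0mx.
rewrite exchange_big; apply: eq_bigr => i _ /=.
have [l Rl] := maps_coset_exists i xH.
rewrite (bigD1 l) //= big1 ?addr0 => [|l' nl]; last first.
  by case: ifP => // /andP [Rl' _]; case/eqP: nl; exact: maps_coset_unique Rl' Rl.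
have E : (t i * (x * y) * (t j)^-1 = (t i * x * (t l)^-1) * (t l * y * (t j)^-1))%g.
  by rewrite !mulgA mulgKV.
rewrite Rl /=; move: Rl; rewrite /maps_coset E => Rl.
rewrite (groupMl _ Rl); case: ifP => // Ry.
by rewrite repr_mxM // mulmxA.
Qed.

Lemma ind_act1 M : act 1%g M = M.
Proof.
have Rii i : maps_coset 1%g i i by rewrite /maps_coset mulg1 mulgV group1.
apply/row_matrixP => j; rewrite row_ind_act (bigD1 j) //= big1 ?addr0 => [|i nij].
  by rewrite Rii mulg1 mulgV repr_mx1 mulmx1.
by case: ifP => // Rij; case/eqP: nij; exact: maps_coset_unique (Rii i) Rij.
Qed.

Lemma ind_mxM x y : x \in H -> y \in H -> imx (x * y)%g = imx x *m imx y.
Proof.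
move=> xH yH; apply/row_matrixP => k.
by rewrite !rowE -[delta_mx 0 k]vec_mxK mulmxA !mxvec_ind_act ind_actM.
Qed.

Lemma ind_mx1 : imx 1%g = 1.
Proof.
apply/row_matrixP => k.
by rewrite !rowE -[delta_mx 0 k]vec_mxK mxvec_ind_act ind_act1 mulmx1.
Qed.

Lemma ind_mxX x k : x \in H -> imx (x ^+ k)%g = imx x ^+ k.
Proof.
move=> xH; elim: k => [|k IH]; first by rewrite expg0 ind_mx1 expr0.
by rewrite expgS ind_mxM ?groupX // IH exprS.
Qed.

Lemma ind_mx_order x : x \in H -> imx x ^+ #[x]%g = 1.
Proof. by move=> xH; rewrite -ind_mxX // expg_order ind_mx1. Qed.

Definition ind_tensor (i : 'I_n) (v : 'rV[F]_a) : 'M[F]_(n, a) :=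
  \matrix_(k < n) (if k == i then v else 0).

Lemma row_ind_tensor i v k : row k (ind_tensor i v) = if k == i then v else 0.
Proof. by rewrite rowK. Qed.

Lemma ind_act_tensor g i j v : maps_coset g i j ->
  act g (ind_tensor i v) = ind_tensor j (v *m rV (t i * g * (t j)^-1)%g).
Proof.
move=> Rij; apply/row_matrixP => k; rewrite row_ind_act (bigD1 i) //= big1 ?addr0.
  rewrite !row_ind_tensor eqxx; have [->|nkj] := eqVneq k j; first by rewrite Rij.
  by case: ifP => // Rik; case/eqP: nkj; exact: maps_coset_unique Rik Rij.
by move=> i' ni; rewrite row_ind_tensor (negbTE ni) mul0mx; case: ifP.
Qed.

Lemma ind_tensor_rows M : M = \sum_(j < n) ind_tensor j (row j M).
Proof.
apply/row_matrixP => k; rewrite linear_sum /= (bigD1 k) //= big1 ?addr0.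
  by rewrite row_ind_tensor eqxx.
by move=> j nj; rewrite row_ind_tensor eq_sym (negbTE nj).
Qed.

Lemma ind_tensor_coords i v :
  ind_tensor i v = \sum_(l < a) v 0 l *: ind_tensor i (delta_mx 0 l).
Proof.
apply/row_matrixP => k; rewrite linear_sum /= row_ind_tensor.
under eq_bigr => l _ do rewrite linearZ /= row_ind_tensor.
case: (k == i); first by rewrite -row_sum_delta.
by rewrite big1 // => l _; rewrite scaler0.
Qed.

Definition ind_block_basis c := [seq mxvec (ind_tensor c (delta_mx 0 l)) | l : 'I_a].

Lemma size_ind_block_basis c : size (ind_block_basis c) = a.
Proof. by rewrite size_map size_enum_ord. Qed.

Lemma ind_cyclic_spans_full x c0 c1 : x \in H ->
    (forall j, exists2 c, c \in [:: c0; c1] & exists k, maps_coset (x ^+ k)%g c j) ->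
  (1%:M <= cyclic_spans #[x]%g (imx x) (ind_block_basis c0 ++ ind_block_basis c1))%MS.
Proof.
move=> xH reach; apply/rV_subP => u _.
rewrite -[u]vec_mxK (ind_tensor_rows (vec_mx u)) linear_sum /=.
apply: summx_sub => j _; have [c c01 [k Rk]] := reach j.
pose w := row j (vec_mx u) *m invmx (rV (t c * x ^+ k * (t j)^-1)%g).
have -> : ind_tensor j (row j (vec_mx u)) = act (x ^+ k)%g (ind_tensor c w).
  by rewrite (ind_act_tensor _ Rk) /w mulmxKV // repr_mx_unit.
rewrite -mxvec_ind_act ind_mxX // (ind_tensor_coords c w) linear_sum /= mulmx_suml.
apply: summx_sub => l _; rewrite linearZ /= -scalemxAl scalemx_sub //.
rewrite (submx_trans (cyclic_span_pow (order_gt0 x) (ind_mx_order xH) _ _)) //.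
apply: cyclic_span_sub_spans; rewrite mem_cat.
have inB : mxvec (ind_tensor c (delta_mx 0 l)) \in ind_block_basis c.
  exact: (map_f (fun l => mxvec (ind_tensor c (delta_mx 0 l)))) (mem_enum _ l).
by move: c01 inB; rewrite !inE => /orP [] /eqP -> ->; rewrite ?orbT.
Qed.

Lemma ind_gen_cyclic_spans y k (s : seq 'rV[F]_(n * a)) m (W : 'M[F]_(m, n * a)) :
    y \in H -> ind_submod rV W -> size s = k -> all (fun w => w <= W)%MS s ->
    (W <= cyclic_spans #[y]%g (imx y) s)%MS ->
  (ind_gen rV (fun i : 'I_k => nth 0 s i) :=: W)%MS.
Proof.
move=> yH WH sz sW Ws; apply/eqmxP/andP; split.
  apply/sumsmx_subP => i _; apply/sumsmx_subP => x xH; rewrite genmxE.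
  by rewrite (submx_trans _ (WH x xH)) ?submxMr ?(allP sW) ?mem_nth ?sz.
apply: submx_trans Ws _; apply: cyclic_spans_subP => w ws.
have ltik : (index w s < k)%N by rewrite -sz index_mem.
apply/sumsmx_subP => j _; rewrite genmxE -ind_mxX //.
rewrite (sumsmx_sup (Ordinal ltik)) // (sumsmx_sup (y ^+ j)%g) ?groupX //.
by rewrite genmxE /= nth_index.
Qed.

End Induced.

Section EvenCycle.
Variables (T : finType) (P : {set T}) (e : seq T) (d : T).
Hypotheses (e_uniq : uniq e) (eP : {subset e <= P}).
Local Notation x i := (nth d e i).

Lemma perm_cycle_prefix n : (n < size e)%N -> exists s : {perm T},
  [/\ perm_on P s, odd_perm s = odd n,
      forall i, (i < n)%N -> s (x i) = x i.+1,
      s (x n) = x 0 & forall j, (n < j < size e)%N -> s (x j) = x j].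
Proof.
have xne i j : (i < size e)%N -> (j < size e)%N -> i != j -> x i != x j.
  by move=> ie je; rewrite nth_uniq.
elim: n => [|n IH] ltne.
  exists 1%g; split; rewrite ?perm_on1 ?odd_perm1 ?perm1 //.
  by move=> j _; rewrite perm1.
have [s [sP so sa sb sc]] := IH (ltnW ltne).
have n0 : x 0 != x n.+1 by apply: xne => //; lia.
exists (s * tperm (x 0) (x n.+1))%g; split.
- apply: perm_onM sP _; apply: subset_trans (tperm_on _ _) _.
  by rewrite subUset !sub1set !eP ?mem_nth // (leq_ltn_trans _ ltne).
- by rewrite odd_permM so odd_tperm n0 /= addbT.
- move=> i ltin; rewrite permM; have [lt_in | ge_in] := ltnP i n.
    by rewrite sa // tpermD //; apply: xne; lia.
  have -> : i = n by lia.
  by rewrite sb tpermL.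
- by rewrite permM sc ?tpermR //; apply/andP; split; lia.
- move=> j /andP [ltnj ltje]; rewrite permM sc; last by apply/andP; split; lia.
  by rewrite tpermD //; apply: xne; lia.
Qed.

Lemma even_perm_orbit_prefix : (0 < size e)%N -> exists s : {perm T},
  [/\ perm_on P s, ~~ odd_perm s &
      forall i, (i < (size e).-1)%N -> exists m, (s ^+ m)%g (x 0) = x i].
Proof.
move=> e_gt0; set u := (size e).-1; have u_half := odd_double_half u.
have [|s [sP so sa _ _]] := @perm_cycle_prefix u./2.*2; first by lia.
exists s; split; first by [].
  by rewrite so odd_double.
move=> i ltiu; exists i; elim: i ltiu => [|i IH] ltiu; first by rewrite expg0 perm1.
by rewrite expgSr permM IH ?sa //; lia.
Qed.

End EvenCycle.

Section CosetPermutations.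
Variables (gT : finGroupType) (H H1 : {group gT}).
Hypothesis sH1H : H1 \subset H.
Local Notation P := (rcosets H1 H).
Local Notation t := (@ind_rep gT H H1).

Lemma rcosetsMr C z : C \in P -> z \in H -> (C :* z)%g \in P.
Proof.
move=> /rcosetsP [w wH ->] zH.
by rewrite -rcosetM mem_rcosets mulSGid // groupM.
Qed.

Lemma rcosets_ind_rep C : C \in P -> exists c, C = (H1 :* t c)%g.
Proof. by case/rcosetsP => w wH ->; exact: rcoset_ind_rep. Qed.

Lemma coset_perm_imageP s : s \in coset_perm_image H H1 ->
  exists2 y, y \in H & forall C m, C \in P -> (s ^+ m)%g C = (C :* y ^+ m)%g.
Proof.
case/imsetP => y yH ->; exists y => // C m CP.
have Pstable : (actperm 'Rs y \in 'N(P | 'P))%g.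
  apply/astabsP => D /=; rewrite apermE actpermE /= rcosetE.
  apply/idP/idP => [DyP|DP]; last exact: rcosetsMr.
  by rewrite -(rcosetK y D) rcosetsMr // groupV.
elim: m => [|m IH]; first by rewrite expg0 perm1 rcoset1.
rewrite expgSr permM IH restr_permE ?rcosetsMr ?groupX //.
by rewrite actpermE /= rcosetE expgSr rcosetM.
Qed.

Lemma two_orbit_element :
    (coset_perm_image H H1 = coset_Alt H H1 \/ coset_perm_image H H1 = coset_Sym H H1) ->
  exists2 y, y \in H & exists c0 c1 : 'I_(ind_deg H H1),
    forall j, exists2 c, c \in [:: c0; c1] & exists k, maps_coset (y ^+ k)%g c j.
Proof.
move=> hU; set e := enum P.
have ePe : {subset e <= P} by move=> C; rewrite mem_enum.
have e_gt0 : (0 < size e)%N by rewrite -cardE indexg_gt0.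
have [s [sP s_even s_orbit]] := even_perm_orbit_prefix set0 (enum_uniq _) ePe e_gt0.
rewrite -/e in s_orbit.
have /coset_perm_imageP [y yH sy] : s \in coset_perm_image H H1.
  by case: hU => ->; rewrite !inE sP ?s_even.
have [c0 E0] := rcosets_ind_rep (ePe _ (mem_nth set0 e_gt0)).
have lt_last : ((size e).-1 < size e)%N by rewrite ltn_predL.
have [c1 E1] := rcosets_ind_rep (ePe _ (mem_nth set0 lt_last)).
exists y => //; exists c0, c1 => j.
have Cj : (H1 :* t j)%g \in e.
  by rewrite mem_enum mem_rcosets mulSGid ?ind_repH.
have [lt_je | le_je] := ltnP (index (H1 :* t j)%g e) (size e).-1.
  have [m sm] := s_orbit _ lt_je; exists c0; first exact: mem_head.
  exists m; apply/maps_cosetP; rewrite rcosetM -E0 -sy ?ePe ?mem_nth // sm nth_index //.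
exists c1; first by rewrite !inE eqxx orbT.
exists 0%N; apply/maps_cosetP; rewrite expg0 mulg1 -E1.
suff -> : (size e).-1 = index (H1 :* t j)%g e by rewrite nth_index.
by apply/eqP; rewrite eqn_leq le_je -ltnS prednK // index_mem.
Qed.

End CosetPermutations.

Local Close Scope ring_scope.

Theorem proposition2p2 (F : fieldType) (p : nat) (charF : (p \in [pchar F])%R)
    (gT : finGroupType) (H H1 : {group gT}) (sH1H : H1 \subset H)
    (u_ge2 : (2 <= #|H : H1|%g)%N) (a : nat) (rV : mx_representation F H1 a)
    (hU : coset_perm_image H H1 = coset_Alt H H1 \/
          coset_perm_image H H1 = coset_Sym H H1)
    (m : nat) (W : 'M[F]_(m, ind_deg H H1 * a)) (hW : ind_submod rV W) :
  exists v : 'I_(2 * a) -> 'rV[F]_(ind_deg H H1 * a),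
    (ind_gen rV v :=: W)%MS.
Proof.
have [y yH [c0 [c1 reach]]] := two_orbit_element sH1H hU.
have W_full := submx_trans (submx1 W) (ind_cyclic_spans_full rV sH1H yH reach).
have [s [size_s sW Ws]] :=
  cyclic_spans_sub_generated (order_gt0 y) (ind_mx_order rV sH1H yH) (hW y yH) W_full.
exists (fun i => nth 0%R s i); apply: (ind_gen_cyclic_spans sH1H yH hW _ sW Ws).
by rewrite size_s size_cat !size_ind_block_basis addnn -mul2n.
Qed.
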